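(* Let $k$ be any field and $d$ a positive integer. Then $d\,S_{d+1}(x_1,\ldots,x_{d+1})\in R_1^{(d)}$.
   Context: $X=\{x_1,x_2,\ldots\}$ is a countably infinite set and $k_0\langle X\rangle$ is the free associative $k$-algebra (without identity) on $X$. A $T$-space is a $k$-linear subspace closed under every algebra endomorphism of $k_0\langle X\rangle$; the $T$-space generated by a subset is the smallest $T$-space containing it. $S_d(v_1,\ldots,v_d)=\sum_{\sigma\in\Sigma_d}\prod_{i=1}^d v_{\sigma(i)}$, and $R_1^{(d)}$ is the $T$-space generated by $S_d(x_1,\ldots,x_d)$. *)

From HB Require Import structures.
From mathcomp Require Import all_boot all_order all_algebra all_fingroup.
From mathcomp.multinomials Require Import monalg.
Set Implicit Arguments. Unset Strict Implicit. Unset Printing Implicit Defensive.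
Import GRing.Theory.
Local Open Scope ring_scope.

(* The free unital associative k-algebra k<X> on X = {x_0, x_1, ...}:
   the monoid algebra of the free monoid on nat. *)
Definition FA (k : fieldType) := {malg k[{fmonom nat}]}.

(* The variable x_i (the paper's x_{i+1}). *)
Definition X (k : fieldType) (i : nat) : FA k := << fmu i >>.

(* Membership in k_0<X>: zero coefficient on the empty word. *)
Definition in_k0X (k : fieldType) (p : FA k) : Prop := p@_(fmone nat) = 0.

Definition is_subspace (k : fieldType) (V : FA k -> Prop) : Prop :=
  [/\ forall p, V p -> in_k0X p,
      V 0,
      forall p q, V p -> V q -> V (p + q)
    & forall (a : k) p, V p -> V (a *: p)].

(* phi is a (non-unital) k-algebra endomorphism of k_0<X>
   (only its values on k_0<X> matter). *)
Definition is_alg_endo (k : fieldType) (phi : FA k -> FA k) : Prop :=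
  [/\ forall p, in_k0X p -> in_k0X (phi p),
      forall p q, in_k0X p -> in_k0X q -> phi (p + q) = phi p + phi q,
      forall (a : k) p, in_k0X p -> phi (a *: p) = a *: phi p
    & forall p q, in_k0X p -> in_k0X q -> phi (p * q) = phi p * phi q].

Definition is_Tspace (k : fieldType) (V : FA k -> Prop) : Prop :=
  is_subspace V /\
  forall phi, is_alg_endo phi -> forall p, V p -> V (phi p).

Definition in_Tspace_gen (k : fieldType) (S : FA k -> Prop) (p : FA k) : Prop :=
  forall V : FA k -> Prop, is_Tspace V -> (forall q, S q -> V q) -> V p.

Definition Ssym (k : fieldType) (d : nat) (v : 'I_d -> FA k) : FA k :=
  \sum_(s : 'S_d) \prod_(i < d) v (s i).

Definition Sx (k : fieldType) (d : nat) : FA k := Ssym (fun i : 'I_d => X k i).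

(* Merging two variables of S_{d+1} yields S_d: substituting x_i x_j for one
   variable of S_d(x_1, ..., x_d) and the remaining variables of
   {x_1, ..., x_{d+1}} \ {x_i, x_j} for the others gives the sum of the words of
   S_{d+1} in which x_j immediately follows x_i.  Every word of length d+1 has
   exactly d adjacent pairs, so summing these endomorphic images of S_d over
   all ordered pairs i <> j gives d S_{d+1}. *)
From HB Require Import structures.
From mathcomp Require Import all_boot all_order all_algebra all_fingroup.
From mathcomp.multinomials Require Import monalg.
Import GRing.Theory.
Local Open Scope ring_scope.
Set Implicit Arguments. Unset Strict Implicit.

Section SymmetricProducts.
Variable R : pzRingType.
Implicit Types (a : R) (l : seq R).

Fixpoint picks l : seq (R * seq R) :=
  if l is a :: l' then (a, l') :: [seq (p.1, a :: p.2) | p <- picks l'] else [::].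

Lemma big_picks_cons a l (F : R * seq R -> R) :
  \sum_(p <- picks (a :: l)) F p = F (a, l) + \sum_(p <- picks l) F (p.1, a :: p.2).
Proof. by rewrite /= big_cons big_map. Qed.

Lemma exchange_big_picks l (G : R -> R -> seq R -> R) :
  \sum_(p <- picks l) \sum_(q <- picks p.2) G p.1 q.1 q.2 =
  \sum_(p <- picks l) \sum_(q <- picks p.2) G q.1 p.1 q.2.
Proof.
elim: l G => [|a l IHl] G; first by rewrite !big_nil.
have picks_inner (H : R -> R -> seq R -> R) :
    \sum_(p <- picks l) \sum_(q <- picks (a :: p.2)) H p.1 q.1 q.2
  = \sum_(p <- picks l) (H p.1 a p.2 + \sum_(q <- picks p.2) H p.1 q.1 (a :: q.2)).
  by apply: eq_bigr => p _; rewrite big_picks_cons.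
rewrite !big_picks_cons /= (picks_inner G) (picks_inner (fun x y r => G y x r)).
rewrite !big_split /= (IHl (fun x y r => G x y (a :: r))).
by rewrite addrA [X in X + _]addrC -addrA.
Qed.

Lemma perm_picks l p : p \in picks l -> perm_eq l (p.1 :: p.2).
Proof.
elim: l p => [|a l IHl] p //=; rewrite in_cons => /orP[/eqP -> //|].
case/mapP => q /IHl lq -> /=.
by rewrite perm_sym (perm_catCA [:: q.1] [:: a]) perm_cons perm_sym.
Qed.

Lemma size_picks l p : p \in picks l -> size p.2 = (size l).-1.
Proof. by move/perm_picks/perm_size ->. Qed.

(* The ordered symmetric product of the entries of [l]; the fuel [n] is
   [size l] in [symprod]. *)
Fixpoint symprodn n l : R :=
  if n is n'.+1 then \sum_(p <- picks l) p.1 * symprodn n' p.2 else 1.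

Definition symprod l := symprodn (size l) l.

Lemma symprodE l : l != [::] -> symprod l = \sum_(p <- picks l) p.1 * symprod p.2.
Proof.
case: l => // a l _; apply: eq_big_seq => p p_in.
by rewrite /symprod (size_picks p_in).
Qed.

Lemma symprod_cons a l :
  symprod (a :: l) = a * symprod l + \sum_(p <- picks l) p.1 * symprod (a :: p.2).
Proof. by rewrite symprodE // big_cons big_map. Qed.

Definition merge_pairs l :=
  \sum_(p <- picks l) \sum_(q <- picks p.2) symprod (p.1 * q.1 :: q.2).

Lemma merge_pairsE l : merge_pairs l = symprod l *+ (size l).-1.
Proof.
move Hn: (size l) => n; elim: n l Hn => [|n IHn] l Hn.
  by move/size0nil: Hn => ->; rewrite /merge_pairs big_nil.
case: n IHn Hn => [|n] IHn Hn.
  by case: l Hn => [|a []] // _; rewrite /merge_pairs big_cons !big_nil addr0.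
have l_nil : l != [::] by case: l Hn.
have p2_nil p : p \in picks l -> p.2 != [::].
  by move/size_picks; rewrite Hn; case: (p.2).
(* Split each term by whether the merged pair comes first: those terms sum to
   [symprod l]; after exchanging the order of the picks, the others sum to
   [\sum_p p.1 * merge_pairs p.2], i.e. to [n] copies of [symprod l]. *)
rewrite /merge_pairs.
under eq_bigr => p _ do under eq_bigr => q _ do rewrite symprod_cons.
under eq_bigr => p _ do rewrite big_split /=.
rewrite big_split /=.
have -> : \sum_(p <- picks l) \sum_(q <- picks p.2) p.1 * q.1 * symprod q.2 = symprod l.
  rewrite (symprodE l_nil) big_seq [RHS]big_seq; apply: eq_bigr => p /p2_nil p2n.
  by rewrite (symprodE p2n) mulr_sumr; apply: eq_bigr => q _; rewrite mulrA.
under eq_bigr => p _ do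
  rewrite (exchange_big_picks p.2 (fun y z r => z * symprod (p.1 * y :: r))).
rewrite (exchange_big_picks l
  (fun x y r => \sum_(z <- picks r) y * symprod (x * z.1 :: z.2))) /=.
have -> : \sum_(p <- picks l) \sum_(q <- picks p.2)
    \sum_(z <- picks q.2) p.1 * symprod (q.1 * z.1 :: z.2) = symprod l *+ n.
  rewrite (symprodE l_nil) -sumrMnl big_seq [RHS]big_seq.
  apply: eq_bigr => p /size_picks; rewrite Hn /= => /IHn p2E.
  by rewrite -mulrnAr -p2E /merge_pairs mulr_sumr; apply: eq_bigr => q _; rewrite mulr_sumr.
by rewrite -mulrS.
Qed.

End SymmetricProducts.

Section SymmetricPolynomials.
Variable K : fieldType.

Lemma Ssym0 (v : 'I_0 -> FA K) : Ssym v = 1.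
Proof.
rewrite /Ssym (eq_bigr (fun _ => 1)); last by move=> s _; rewrite big_ord0.
by rewrite sumr_const card_Sn.
Qed.

Lemma lift_perm0_bij n :
  bijective (fun js : 'I_n.+1 * 'S_n => lift_perm ord0 js.1 js.2).
Proof.
apply: inj_card_bij; last by rewrite card_prod card_ord !card_Sn factS.
move=> [j s] [j' s'] /= eq_js.
have ej : j = j' by rewrite -(lift_perm_id ord0 j s) eq_js lift_perm_id.
subst j'; congr (_, _); apply/permP => k; apply: (@lift_inj _ j).
by rewrite -!(lift_perm_lift ord0) eq_js.
Qed.

Lemma Ssym_recl n (v : 'I_n.+1 -> FA K) :
  Ssym v = \sum_(j < n.+1) v j * Ssym (fun i : 'I_n => v (lift j i)).
Proof.
rewrite /Ssym (reindex _ (onW_bij _ (lift_perm0_bij n))).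
rewrite -(pair_bigA _ (fun j (s : 'S_n) => \prod_(i < n.+1) v (lift_perm ord0 j s i))).
apply: eq_bigr => j _; rewrite mulr_sumr; apply: eq_bigr => s _.
rewrite big_ord_recl lift_perm_id; congr (_ * _).
by apply: eq_bigr => i _; rewrite lift_perm_lift.
Qed.

Lemma lift_lift0 m (j : 'I_m.+1) (k : 'I_m) :
  lift (lift ord0 j) (lift ord0 k) = lift ord0 (lift j k) :> 'I_m.+2.
Proof. by apply: val_inj; rewrite /= /bump /= !add1n ltnS addnS. Qed.

Lemma picks_map_enum n (v : 'I_n.+1 -> FA K) :
  picks [seq v i | i <- enum 'I_n.+1] =
  [seq (v j, [seq v (lift j i) | i <- enum 'I_n]) | j <- enum 'I_n.+1].
Proof.
elim: n v => [|n IHn] v; first by rewrite enum_ordSl enum_ord0.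
rewrite enum_ordSl /= -map_comp IHn -!map_comp; congr (_ :: _).
apply: eq_map => j /=; rewrite [in RHS]enum_ordSl /= -map_comp.
have -> : lift (lift ord0 j) ord0 = ord0 by apply: val_inj.
by congr (_, _ :: _); apply: eq_map => i /=; rewrite lift_lift0.
Qed.

Lemma Ssym_symprod n (v : 'I_n -> FA K) : Ssym v = symprod [seq v i | i <- enum 'I_n].
Proof.
elim: n v => [|n IHn] v; first by rewrite Ssym0 enum_ord0.
rewrite Ssym_recl symprodE; last by rewrite enum_ordSl.
by rewrite picks_map_enum big_map big_enum /=; apply: eq_bigr => j _; rewrite IHn.
Qed.

Lemma Sx_symprod d : Sx K d = symprod [seq X K i | i <- iota 0 d].
Proof. by rewrite /Sx Ssym_symprod -val_enum_ord -map_comp. Qed.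

End SymmetricPolynomials.

Lemma malgC_comm (K : fieldType) (c : K) (g : FA K) : GRing.comm c%:MP g.
Proof.
rewrite /GRing.comm !malgM_def fgmulUg fgmulgU.
by apply: eq_bigr => m _; rewrite mulrC mul1m mulm1.
Qed.

Lemma in_k0XMl (K : fieldType) (p q : FA K) : in_k0X p -> in_k0X (p * q).
Proof. by rewrite /in_k0X rmorphM => /= ->; rewrite mul0r. Qed.

Section Substitution.
Variables (K : fieldType) (sigma : nat -> FA K).

Definition subst_word (m : fmonom nat) : FA K := \prod_(i <- (m : seq nat)) sigma i.

Lemma subst_word_is_mmorphism : mmorphism subst_word.
Proof.
split; last by rewrite /subst_word fm1 big_nil.
by move=> m1 m2; rewrite /subst_word fmM big_cat.
Qed.

HB.instance Definition _ :=
  isMultiplicative.Build (fmonom nat) (FA K) subst_word subst_word_is_mmorphism.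

Definition subst : FA K -> FA K :=
  mmap (@mkmalgU (fmonom nat) K (fmone nat)) subst_word.

Lemma substM p q : subst (p * q) = subst p * subst q.
Proof.
rewrite /subst; have [-> //] := @commr_mmap_is_multiplicative _ _ _
  (@mkmalgU (fmonom nat) K (fmone nat)) subst_word (fun g m _ => malgC_comm g@_m _).
Qed.

Lemma subst0 : subst 0 = 0. Proof. exact: mmap0. Qed.
Lemma subst1 : subst 1 = 1. Proof. exact: mmap1. Qed.
Lemma substD p q : subst (p + q) = subst p + subst q. Proof. exact: mmapD. Qed.

Lemma substZ (a : K) p : subst (a *: p) = a *: subst p.
Proof. by rewrite /subst mmapZ mul_malgC. Qed.

Lemma substX i : subst (X K i) = sigma i.
Proof. by rewrite /subst /X mmapU [X in X * _]mpolyC1E mul1r /subst_word fmU big_seq1. Qed.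

Lemma subst_Sx d : subst (Sx K d) = Ssym (fun i : 'I_d => sigma i).
Proof.
rewrite /Sx /Ssym (big_morph subst substD subst0); apply: eq_bigr => s _.
rewrite (big_morph subst substM subst1).
by apply: eq_bigr => i _; rewrite substX.
Qed.

Hypothesis sigma_k0X : forall i, in_k0X (sigma i).

Lemma subst_k0X p : in_k0X p -> in_k0X (subst p).
Proof.
move=> p1; rewrite /in_k0X /subst mmapE raddf_sum /=.
apply: big1 => m _; rewrite mcoeffCM.
have [->|m_neq1] := eqVneq m (fmone nat); first by rewrite p1 mul0r.
rewrite /subst_word rmorph_prod /=.
case: m m_neq1 => [[|i s]] m_neq1; first by rewrite fmoneE eqxx in m_neq1.
by rewrite big_cons sigma_k0X mul0r mulr0.
Qed.

Lemma subst_alg_endo : is_alg_endo subst.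
Proof.
split=> [|p q _ _|a p _|p q _ _]; [exact: subst_k0X | exact: substD | exact: substZ |].
exact: substM.
Qed.

End Substitution.

Lemma Tspace_symprod (K : fieldType) (V : FA K -> Prop) d :
  is_Tspace V -> V (Sx K d) ->
  forall w, size w = d -> {in w, forall x, in_k0X x} -> V (symprod w).
Proof.
move=> [_ V_endo] VSx w w_size w_k0X.
pose sigma i := nth 0 w i.
have sigma_k0X i : in_k0X (sigma i).
  rewrite /sigma; have [i_lt|i_ge] := ltnP i (size w); first exact/w_k0X/mem_nth.
  by rewrite nth_default // /in_k0X mcoeff0.
have := V_endo _ (subst_alg_endo sigma_k0X) _ VSx.
rewrite subst_Sx Ssym_symprod.
by rewrite (map_comp sigma val) val_enum_ord -w_size -/(mkseq _ _) mkseq_nth.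
Qed.

Lemma Tspace_merge_pairs (K : fieldType) (V : FA K -> Prop) d l :
  is_Tspace V -> V (Sx K d) -> size l = d.+1 -> {in l, forall x, in_k0X x} ->
  V (merge_pairs l).
Proof.
move=> V_Tspace VSx l_size l_k0X; case: (V_Tspace) => [[_ V0 VD _] _].
rewrite /merge_pairs big_seq; apply: (big_ind V) => // p /perm_picks l_p.
rewrite big_seq; apply: (big_ind V) => // q /perm_picks p2_q.
have mem_p2 x : x \in p.2 -> x \in l by rewrite (perm_mem l_p) inE orbC => ->.
have mem_q2 x : x \in q.2 -> x \in p.2 by rewrite (perm_mem p2_q) inE orbC => ->.
apply: (Tspace_symprod V_Tspace VSx) => [|x].
  by move: (perm_size l_p); rewrite l_size /= (perm_size p2_q) => -[->].
rewrite inE => /orP[/eqP ->|/mem_q2/mem_p2/l_k0X //].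
by apply/in_k0XMl/l_k0X; rewrite (perm_mem l_p) mem_head.
Qed.

Theorem corollary2p3 (k : fieldType) (d : nat) (hd : (0 < d)%N) :
  in_Tspace_gen (fun q => q = Sx k d) (Sx k d.+1 *+ d).
Proof.
move=> V V_Tspace VS.
set l := [seq X k i | i <- iota 0 d.+1].
have l_size : size l = d.+1 by rewrite size_map size_iota.
have -> : Sx k d.+1 *+ d = merge_pairs l by rewrite merge_pairsE l_size Sx_symprod.
apply: Tspace_merge_pairs V_Tspace (VS _ erefl) l_size _ => x.
by case/mapP => i _ ->; rewrite /in_k0X /X mcoeffU1 fmuE fmoneE.
Qed.
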